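(* Let $\theta < \sigma$ be two infinite cardinals such that $\theta$ is regular, $\sigma < \kappa$, and $d(\theta, \mu) < \kappa$ for every cardinal $\mu$ with $\theta \leq \mu < \sigma$. Let $J$ be a $\kappa$-complete ideal on $\kappa$ with $NS_\kappa|E^\kappa_\theta \subseteq J$ such that $\clubsuit_\kappa^{{\rm cof}/\sigma, *}[J]$ holds. Then $\clubsuit_\kappa^*[J]$ holds.
   Context: $\kappa$ is a regular uncountable cardinal. An ideal on $\kappa$ is a nonempty $J \subseteq P(\kappa)$ with $\kappa \notin J$, every bounded subset of $\kappa$ in $J$, $J$ closed under subsets and under unions of two members; $J^* = \{A \subseteq \kappa : \kappa\setminus A \in J\}$; $\kappa$-complete means closed under unions of fewer than $\kappa$ members. $E^\kappa_\theta$ is the set of limit ordinals below $\kappa$ of cofinality $\theta$; $NS_\kappa|E^\kappa_\theta = \{B : B \cap E^\kappa_\theta \text{ nonstationary}\}$. $acc(\kappa)$ is the set of nonzero limit ordinals below $\kappa$; $P_\sigma(X) = \{x \subseteq X : |x| < \sigma\}$; $[\kappa]^\kappa$ is the set of size-$\kappa$ subsets of $\kappa$. For cardinals $\tau \leq \mu$ with $\tau\ge1$, $\mu \ge\omega$, $d(\tau,\mu)$ is the least cardinality of $X \subseteq [\mu]^\tau$ such that every $e \in [\mu]^\tau$ has a subset in $X$. $\clubsuit_\kappa^{{\rm cof}/\sigma,*}[J]$: there are $B^i_\delta \in P_\sigma(\delta)$ for $i < \delta < \kappa$ such that for every $A \in [\kappa]^\kappa$, $\{\delta < \kappa : \exists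 i < \delta\,(\sup(A \cap B^i_\delta) = \delta)\} \in J^*$. $\clubsuit_\kappa^*[J]$: there are $s^i_\alpha \subseteq \alpha$ with $\sup s^i_\alpha = \alpha$ for $i < \alpha \in acc(\kappa)$ such that $\{\alpha < \kappa : \exists i < \alpha\,(s^i_\alpha \subseteq A)\} \in J^*$ for all $A \in [\kappa]^\kappa$. *)

(* Ordinals below kappa are modelled as the
   elements of a type K equipped with a strict well-order [lt]; kappa is the
   order type of (K, lt).  Cardinals below kappa are initial ordinals in K. *)
From Stdlib Require Import Classical.
Set Implicit Arguments.

Definition set (T : Type) := T -> Prop.

Definition le_card (A B : Type) : Prop :=
  exists f : A -> B, forall x y, f x = f y -> x = y.
Definition lt_card (A B : Type) : Prop := le_card A B /\ ~ le_card B A.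
Definition eq_card (A B : Type) : Prop := le_card A B /\ le_card B A.

Section Ord.
Variable K : Type.
Variable lt : K -> K -> Prop.

Definition le (x y : K) : Prop := lt x y \/ x = y.

Definition well_order : Prop :=
  (forall x y z, lt x y -> lt y z -> lt x z) /\
  (forall x, ~ lt x x) /\
  (forall x y, lt x y \/ x = y \/ lt y x) /\
  well_founded lt.

(* the ordinal a, as the set of its predecessors *)
Definition seg (a : K) : Type := {y : K | lt y a}.

Definition bounded (B : set K) : Prop := exists b, forall x, B x -> lt x b.

Definition regular_uncountable_cardinal : Prop :=
  (forall a, lt_card (seg a) K) /\
  ~ le_card K nat /\
  (forall A : set K, lt_card {x : K | A x} K -> bounded A).

Definition is_cardinal (c : K) : Prop :=
  forall a, lt a c -> lt_card (seg a) (seg c).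
Definition infinite_ord (c : K) : Prop := le_card nat (seg c).
Definition regular_card (c : K) : Prop :=
  forall A : set K, (forall x, A x -> lt x c) ->
    lt_card {x : K | A x} (seg c) ->
    exists b, lt b c /\ forall x, A x -> lt x b.

(* d(theta, mu) < kappa : some cofinal family X in [mu]^theta has size < kappa *)
Definition d_lt_kappa (theta mu : K) : Prop :=
  exists X : set (set K),
    (forall B, X B -> (forall x, B x -> lt x mu) /\ eq_card {x : K | B x} (seg theta)) /\
    (forall e : set K, (forall x, e x -> lt x mu) -> eq_card {x : K | e x} (seg theta) ->
        exists B, X B /\ forall x, B x -> e x) /\
    lt_card {B : set K | X B} K.

Definition is_limit (d : K) : Prop :=
  (exists y, lt y d) /\ forall y, lt y d -> exists z, lt y z /\ lt z d.

Definition cofinal_in (d : K) (S : set K) : Prop :=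
  (forall x, S x -> lt x d) /\ forall y, lt y d -> exists x, S x /\ le y x.

Definition cof_eq (d theta : K) : Prop :=
  (exists S, cofinal_in d S /\ eq_card {x : K | S x} (seg theta)) /\
  (forall S, cofinal_in d S -> le_card (seg theta) {x : K | S x}).

Definition E_cof (theta : K) (d : K) : Prop := is_limit d /\ cof_eq d theta.

Definition club (C : set K) : Prop :=
  (forall a, exists c, C c /\ lt a c) /\
  (forall d, (exists y, lt y d) ->
     (forall y, lt y d -> exists c, C c /\ lt y c /\ lt c d) -> C d).

Definition nonstationary (B : set K) : Prop :=
  exists C, club C /\ forall x, C x -> ~ B x.

Definition NS_restr (theta : K) (B : set K) : Prop :=
  nonstationary (fun x => B x /\ E_cof theta x).

Definition is_ideal (J : set (set K)) : Prop :=
  (exists B, J B) /\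
  ~ J (fun _ => True) /\
  (forall B, bounded B -> J B) /\
  (forall A B, J B -> (forall x, A x -> B x) -> J A) /\
  (forall A B, J A -> J B -> J (fun x => A x \/ B x)).

Definition kappa_complete (J : set (set K)) : Prop :=
  forall F : set (set K), (forall B, F B -> J B) ->
    lt_card {B : set K | F B} K -> J (fun x => exists B, F B /\ B x).

Definition dual (J : set (set K)) (A : set K) : Prop := J (fun x => ~ A x).

Definition sup_is (X : set K) (d : K) : Prop :=
  (forall x, X x -> le x d) /\ (forall y, (forall x, X x -> le x y) -> le d y).

Definition clubsuit_cof_star (sigma : K) (J : set (set K)) : Prop :=
  exists B : K -> K -> set K,
    (forall i d, lt i d ->
       (forall x, B i d x -> lt x d) /\ lt_card {x : K | B i d x} (seg sigma)) /\
    (forall A : set K, eq_card {x : K | A x} K ->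
       dual J (fun d => exists i, lt i d /\ sup_is (fun x => A x /\ B i d x) d)).

Definition clubsuit_star (J : set (set K)) : Prop :=
  exists s : K -> K -> set K,
    (forall i a, is_limit a -> lt i a ->
       (forall x, s i a x -> lt x a) /\ sup_is (s i a) a) /\
    (forall A : set K, eq_card {x : K | A x} K ->
       dual J (fun a => is_limit a /\ exists i, lt i a /\ forall x, s i a x -> A x)).

End Ord.

(* Each guess B^i_d has size < sigma, so injects into some a < sigma; since
   d(theta, |a|) < kappa, fewer than kappa subsets of a catch a size-theta subset of every
   size-theta subset of a. Pulled back to B^i_d, these give families E^i_d(k), k < beta,
   with one beta < kappa for all i, d. Let s^j_d be E^i_d(k) when j codes (i, k) and that
   set is cofinal in d, and d otherwise. If cf d = theta, d is closed under the coding,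
   beta < d and sup (A cap B^i_d) = d, then A cap B^i_d has a cofinal subset R of order
   type theta; some E^i_d(k) inside R has size theta, hence is cofinal in d, and
   s^j_d is contained in A for the code j < d of (i, k). The remaining d form a
   nonstationary subset of E^kappa_theta, a bounded set and a set in J. *)

From Stdlib Require Import Classical ClassicalEpsilon FunctionalExtensionality.

Section Ordinals.
Context {K : Type} {lt : K -> K -> Prop}.
Hypothesis Hwo : well_order lt.
Hypothesis K_nonempty : inhabited K.

Lemma lt_trans x y z : lt x y -> lt y z -> lt x z.
Proof. exact (proj1 Hwo x y z). Qed.

Lemma lt_irrefl x : ~ lt x x.
Proof. exact (proj1 (proj2 Hwo) x). Qed.

Lemma lt_total x y : lt x y \/ x = y \/ lt y x.
Proof. exact (proj1 (proj2 (proj2 Hwo)) x y). Qed.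

Lemma lt_wf : well_founded lt.
Proof. exact (proj2 (proj2 (proj2 Hwo))). Qed.

Lemma le_refl x : le lt x x.
Proof. now right. Qed.

Lemma le_lt_trans x y z : le lt x y -> lt y z -> lt x z.
Proof. intros [H|<-] H'; eauto using lt_trans. Qed.

Lemma lt_le_trans x y z : lt x y -> le lt y z -> lt x z.
Proof. intros H [H'|<-]; eauto using lt_trans. Qed.

Lemma le_trans x y z : le lt x y -> le lt y z -> le lt x z.
Proof. intros [H|<-] H'; [left; eapply lt_le_trans|]; eauto. Qed.

Lemma not_lt_le x y : ~ lt x y -> le lt y x.
Proof. destruct (lt_total x y) as [|[<-|]]; [tauto|right|left]; auto. Qed.

Lemma le_not_lt x y : le lt x y -> ~ lt y x.
Proof. intros H H'. exact (lt_irrefl _ (le_lt_trans _ _ _ H H')). Qed.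

Lemma not_le_lt x y : ~ le lt y x -> lt x y.
Proof.
  intro N; destruct (lt_total x y) as [H|[<-|H]]; [exact H|exfalso; apply N..]; [right|left]; auto.
Qed.

Definition below (a : K) : set K := fun y => lt y a.

Definition least (P : set K) : K :=
  epsilon K_nonempty (fun m => P m /\ forall y, P y -> le lt m y).

Lemma least_spec (P : set K) :
  (exists x, P x) -> P (least P) /\ forall y, P y -> le lt (least P) y.
Proof.
  intros [x Px]; unfold least; apply epsilon_spec.
  induction x as [x IH] using (well_founded_ind lt_wf).
  destruct (classic (exists y, P y /\ lt y x)) as [[y [Py Hy]]|N]; [now apply (IH y)|].
  exists x; split; [exact Px|].
  intros y Py; apply not_lt_le; intro Hy; apply N; eauto.
Qed.

Definition image (f : K -> K) (P : set K) : set K := fun y => exists x, P x /\ y = f x.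

Definition injects (P Q : set K) : Prop :=
  exists f : K -> K, (forall x, P x -> Q (f x)) /\
    (forall x y, P x -> P y -> f x = f y -> x = y).

Lemma injects_trans {P Q R : set K} : injects P Q -> injects Q R -> injects P R.
Proof.
  intros [f [Hf If]] [g [Hg Ig]].
  exists (fun x => g (f x)); split; auto.
Qed.

Lemma subset_injects (P Q : set K) : (forall x, P x -> Q x) -> injects P Q.
Proof. intro H; exists (fun x => x); auto. Qed.

Lemma injects_image (f : K -> K) (P : set K) :
  (forall x y, P x -> P y -> f x = f y -> x = y) -> injects P (image f P).
Proof. intro H; exists f; split; [intros x Px; exists x|]; auto. Qed.

Lemma image_injects (f : K -> K) (P : set K) : injects (image f P) P.
Proof.
  exists (fun y => epsilon K_nonempty (fun x => P x /\ y = f x)); split.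
  - intros y Hy; exact (proj1 (epsilon_spec K_nonempty _ Hy)).
  - intros y z Hy Hz E.
    rewrite (proj2 (epsilon_spec K_nonempty _ Hy)), (proj2 (epsilon_spec K_nonempty _ Hz)), E.
    reflexivity.
Qed.

Lemma proj1_sig_inj {A : Type} (P : A -> Prop) (u v : {x | P x}) :
  proj1_sig u = proj1_sig v -> u = v.
Proof. destruct u, v; simpl; intros <-; f_equal; apply proof_irrelevance. Qed.

Lemma le_card_injects (P Q : set K) : le_card {x | P x} {x | Q x} -> injects P Q.
Proof.
  intros [f Hf].
  exists (fun x => match excluded_middle_informative (P x) with
                   | left p => proj1_sig (f (exist _ x p)) | right _ => x end); split.
  - intros x Px; destruct (excluded_middle_informative (P x)); [apply proj2_sig|tauto].
  - intros x y Px Py.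
    destruct (excluded_middle_informative (P x)), (excluded_middle_informative (P y)); try tauto.
    intro E; exact (f_equal (@proj1_sig _ _) (Hf _ _ (proj1_sig_inj _ _ _ E))).
Qed.

Lemma injects_le_card (P Q : set K) : injects P Q -> le_card {x | P x} {x | Q x}.
Proof.
  intros [f [Hf If]].
  exists (fun u => exist _ (f (proj1_sig u)) (Hf _ (proj2_sig u))).
  intros u v E; apply proj1_sig_inj, If; try apply proj2_sig.
  exact (f_equal (@proj1_sig _ _) E).
Qed.

Lemma cofinal_in_mono d (P Q : set K) :
  (forall x, P x -> Q x) -> (forall x, Q x -> lt x d) -> cofinal_in lt d P -> cofinal_in lt d Q.
Proof.
  intros PQ Qd [_ HP]; split; [exact Qd|].
  intros y Hy; destruct (HP y Hy) as [x [Px Hx]]; eauto.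
Qed.

Lemma below_cofinal_in d : cofinal_in lt d (below d).
Proof. split; [auto|]. intros y Hy; exists y; split; [exact Hy|apply le_refl]. Qed.

Lemma sup_is_cofinal_in d (P : set K) : is_limit lt d -> cofinal_in lt d P -> sup_is lt P d.
Proof.
  intros [_ Hd] [Pd HP]; split; [intros x Px; left; auto|].
  intros y Hy; apply not_lt_le; intro Hyd.
  destruct (Hd y Hyd) as [z [Hyz Hzd]]; destruct (HP z Hzd) as [x [Px Hzx]].
  exact (le_not_lt _ _ (le_trans _ _ _ Hzx (Hy x Px)) Hyz).
Qed.

Lemma cofinal_in_sup_is d (P : set K) :
  (forall x, P x -> lt x d) -> sup_is lt P d -> cofinal_in lt d P.
Proof.
  intros Pd [_ Hsup]; split; [exact Pd|].
  intros y Hy; apply NNPP; intro N.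
  refine (le_not_lt _ _ (Hsup y _) Hy).
  intros x Px; left; apply not_le_lt; intro; apply N; eauto.
Qed.

Section Rank.
Variable W : Type.
Variable R : W -> W -> Prop.
Hypothesis R_wf : well_founded R.

Definition rank : W -> K :=
  Fix R_wf (fun _ => K) (fun w rec => least (fun z => forall w' (p : R w' w), lt (rec w' p) z)).

Lemma rank_eq w : rank w = least (fun z => forall w', R w' w -> lt (rank w') z).
Proof.
  unfold rank at 1; rewrite Fix_eq; [reflexivity|].
  intros x f g H.
  replace g with f; [reflexivity|].
  apply functional_extensionality_dep; intro y; apply functional_extensionality; auto.
Qed.

Lemma rank_spec w : (exists z, forall w', R w' w -> lt (rank w') z) ->
  (forall w', R w' w -> lt (rank w') (rank w)) /\
  (forall z, (forall w', R w' w -> lt (rank w') z) -> le lt (rank w) z).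
Proof. intro H; rewrite rank_eq; exact (least_spec _ H). Qed.

End Rank.

Arguments rank {W R}.
Arguments rank_spec {W R}.

Section Collapse.
Variable Y : set K.

Definition lt_in (y' y : K) : Prop := Y y' /\ lt y' y.

Lemma lt_in_wf : well_founded lt_in.
Proof.
  intro y; induction y as [y IH] using (well_founded_ind lt_wf).
  constructor; intros y' [_ H]; auto.
Qed.

Let collapse := rank lt_in_wf.

Lemma collapse_spec y : le lt (collapse y) y /\
  (forall y', lt_in y' y -> lt (collapse y') (collapse y)) /\
  (forall z, (forall y', lt_in y' y -> lt (collapse y') z) -> le lt (collapse y) z).
Proof.
  induction y as [y IH] using (well_founded_ind lt_wf).
  assert (Hy : forall y', lt_in y' y -> lt (collapse y') y).
  { intros y' [_ H]; exact (le_lt_trans _ _ _ (proj1 (IH y' H)) H). }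
  destruct (rank_spec lt_in_wf y (ex_intro _ y Hy)) as [Mono Least].
  repeat split; auto.
Qed.

Lemma collapse_down y z : lt z (collapse y) -> exists y', Y y' /\ collapse y' = z.
Proof.
  induction y as [y IH] using (well_founded_ind lt_wf); intro Hz.
  destruct (classic (exists y', lt_in y' y /\ ~ lt (collapse y') z)) as [[y' [[Yy' Hy'] N]]|N].
  - destruct (not_lt_le _ _ N) as [H|H]; [exact (IH y' Hy' H)|eauto].
  - exfalso; refine (le_not_lt _ _ (proj2 (proj2 (collapse_spec y)) z _) Hz).
    intros y' Hy'; apply NNPP; eauto.
Qed.

Lemma collapse_inj x y : Y x -> Y y -> collapse x = collapse y -> x = y.
Proof.
  intros Yx Yy E; destruct (lt_total x y) as [H|[H|H]]; [exfalso| exact H| exfalso].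
  - pose proof (proj1 (proj2 (collapse_spec y)) x (conj Yx H)) as L.
    rewrite E in L; exact (lt_irrefl _ L).
  - pose proof (proj1 (proj2 (collapse_spec x)) y (conj Yy H)) as L.
    rewrite E in L; exact (lt_irrefl _ L).
Qed.

Lemma shorter_injects_below s : ~ injects (below s) Y -> exists a, lt a s /\ injects Y (below a).
Proof.
  intro N.
  destruct (classic (forall z, lt z s -> exists y, Y y /\ collapse y = z)) as [Onto|Onto].
  - exfalso; apply N.
    apply (injects_trans (Q := image collapse Y)); [apply subset_injects|apply image_injects].
    intros z Hz; destruct (Onto z Hz) as [y [Yy <-]]; exists y; auto.
  - apply not_all_ex_not in Onto; destruct Onto as [a Onto].
    apply imply_to_and in Onto; destruct Onto as [Ha Onto].
    exists a; split; [exact Ha|]; exists collapse; split; [|exact collapse_inj].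
    intros y Yy; destruct (lt_total (collapse y) a) as [H|[H|H]]; [exact H|exfalso..].
    + exact (Onto (ex_intro _ y (conj Yy H))).
    + exact (Onto (collapse_down y a H)).
Qed.

End Collapse.

Lemma cardinal_below a :
  exists mu, is_cardinal lt mu /\ le lt mu a /\ injects (below a) (below mu).
Proof.
  set (P := fun mu => injects (below a) (below mu)).
  destruct (least_spec P (ex_intro _ a (subset_injects _ _ (fun x Hx => Hx)))) as [Pmu Least].
  exists (least P); split; [|split; [apply Least, subset_injects; auto| exact Pmu]].
  intros b Hb; split.
  - apply injects_le_card, subset_injects; intros x Hx; exact (lt_trans _ _ _ Hx Hb).
  - intro Hle; apply (le_not_lt _ _ (Least b (injects_trans Pmu (le_card_injects _ _ Hle))) Hb).
Qed.

Section Kappa.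
Hypothesis Hkappa : regular_uncountable_cardinal lt.

(* [small P] means |P| < kappa. *)
Definition small (P : set K) : Prop := ~ injects (fun _ => True) P.

Lemma small_of_lt_card P : lt_card {x | P x} K -> small P.
Proof.
  intros [_ N] [f [Hf If]]; apply N.
  exists (fun x => exist _ (f x) (Hf x I)); intros x y E.
  exact (If x y I I (f_equal (@proj1_sig _ _) E)).
Qed.

Lemma lt_card_of_small P : small P -> lt_card {x | P x} K.
Proof.
  intro H; split.
  - exists (@proj1_sig _ _); exact (proj1_sig_inj _).
  - intros [f Hf]; apply H.
    exists (fun x => proj1_sig (f x)); split; [intros; apply proj2_sig|].
    intros x y _ _ E; exact (Hf _ _ (proj1_sig_inj _ _ _ E)).
Qed.

Lemma small_injects P Q : injects P Q -> small Q -> small P.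
Proof. intros PQ HQ HP; exact (HQ (injects_trans HP PQ)). Qed.

Lemma small_below a : small (below a).
Proof. apply small_of_lt_card, (proj1 Hkappa). Qed.

Lemma small_bounded P : small P -> exists b, forall x, P x -> lt x b.
Proof. intro H; apply (proj2 (proj2 Hkappa)), lt_card_of_small, H. Qed.

Lemma bounded_small P b : (forall x, P x -> lt x b) -> small P.
Proof. intro H; exact (small_injects _ _ (subset_injects _ _ H) (small_below b)). Qed.

Lemma small_singleton a : small (fun y => y = a).
Proof.
  intros [f [Hf If]]; apply (proj1 (proj2 Hkappa)).
  exists (fun _ => 0); intros x y _.
  apply If; auto; rewrite (Hf x I), (Hf y I); reflexivity.
Qed.

Lemma exists_gt a : exists b, lt a b.
Proof. destruct (small_bounded _ (small_singleton a)) as [b Hb]; eauto. Qed.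

Lemma small_union P Q : small P -> small Q -> small (fun x => P x \/ Q x).
Proof.
  intros HP HQ.
  destruct (small_bounded _ HP) as [p Hp], (small_bounded _ HQ) as [q Hq].
  destruct (lt_total p q) as [H|[<-|H]]; [apply (bounded_small _ q)|apply (bounded_small _ p)..];
    intros x [Px|Qx]; eauto using lt_trans.
Qed.

Lemma small_image f P : small P -> small (image f P).
Proof. apply small_injects, image_injects. Qed.

Lemma small_bigcup (I : set K) (F : K -> set K) :
  small I -> (forall k, I k -> small (F k)) -> small (fun x => exists k, I k /\ F k x).
Proof.
  intros HI HF.
  set (g := fun k => epsilon K_nonempty (fun b => forall x, F k x -> lt x b)).
  assert (Hg : forall k, I k -> forall x, F k x -> lt x (g k))
    by (intros k Ik; apply (epsilon_spec K_nonempty), small_bounded, HF, Ik).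
  destruct (small_bounded _ (small_image g _ HI)) as [b Hb].
  apply (bounded_small _ b); intros x [k [Ik Fx]].
  apply (lt_trans _ (g k)); [exact (Hg k Ik x Fx)|apply Hb; exists k; auto].
Qed.

Lemma small_pairs_image (F : K -> K -> K) a :
  small (fun y => exists i k, lt i a /\ lt k a /\ y = F i k).
Proof.
  apply (small_injects _ (fun y => exists i, below a i /\ image (F i) (below a) y)).
  - apply subset_injects; intros y [i [k [Hi [Hk ->]]]]; exists i; split; [|exists k]; auto.
  - apply small_bigcup; [apply small_below|intros i _; apply small_image, small_below].
Qed.

Lemma small_nat_range (c : nat -> K) : small (fun y => exists n, y = c n).
Proof.
  intros [f [Hf If]]; apply (proj1 (proj2 Hkappa)).
  exists (fun x => epsilon (inhabits 0) (fun n => f x = c n)); intros x y E.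
  apply If; auto.
  rewrite (epsilon_spec (inhabits 0) _ (Hf x I)), (epsilon_spec (inhabits 0) _ (Hf y I)), E.
  reflexivity.
Qed.

Lemma enumerate_small_family (F : set (set K)) : lt_card {c | F c} K ->
  exists b (en : K -> set K), forall c, F c -> exists k, lt k b /\ en k = c.
Proof.
  intros [[code Hcode] N].
  set (codes := fun k => exists u : {c | F c}, k = code u).
  assert (Hcodes : small codes).
  { intros [f [Hf If]]; destruct K_nonempty as [x0]; destruct (Hf x0 I) as [u0 _].
    apply N; exists (fun x => epsilon (inhabits u0) (fun u => f x = code u)); intros x y E.
    apply If; auto.
    rewrite (epsilon_spec (inhabits u0) _ (Hf x I)), (epsilon_spec (inhabits u0) _ (Hf y I)), E.
    reflexivity. }
  destruct (small_bounded _ Hcodes) as [b Hb].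
  exists b, (fun k => epsilon (inhabits (fun _ => False))
                       (fun c => exists p : F c, code (exist _ c p) = k)).
  intros c Fc; exists (code (exist _ c Fc)); split; [apply Hb; eexists; reflexivity|].
  destruct (epsilon_spec (inhabits (fun _ => False))
              (fun c' => exists p : F c', code (exist _ c' p) = code (exist _ c Fc))
              (ex_intro _ c (ex_intro _ Fc eq_refl))) as [p E].
  exact (f_equal (@proj1_sig _ _) (Hcode _ _ E)).
Qed.

Definition pmax (p : K * K) : K :=
  if excluded_middle_informative (lt (fst p) (snd p)) then snd p else fst p.

Lemma pmax_spec p : le lt (fst p) (pmax p) /\ le lt (snd p) (pmax p) /\
  (pmax p = fst p \/ pmax p = snd p).
Proof.
  unfold pmax; destruct (excluded_middle_informative _) as [H|H].
  - repeat split; [left; exact H|apply le_refl|now right].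
  - repeat split; [apply le_refl|apply not_lt_le, H|now left].
Qed.

Definition closed_under (F : K -> K -> K) (d : K) : Prop :=
  forall i k, lt i d -> lt k d -> lt (F i k) d.

Lemma exists_closure_step (F : K -> K -> K) x :
  exists b, lt x b /\ forall i k, lt i x -> lt k x -> lt (F i k) b.
Proof.
  destruct (small_bounded _ (small_union _ _ (small_singleton x) (small_pairs_image F x)))
    as [b Hb].
  exists b; split; [apply Hb; auto|intros i k Hi Hk; apply Hb; right; eauto].
Qed.

Lemma nat_seq_sup (c : nat -> K) :
  exists d, (forall n, lt (c n) d) /\ forall y, lt y d -> exists n, le lt y (c n).
Proof.
  destruct (small_bounded _ (small_nat_range c)) as [b Hb].
  destruct (least_spec (fun b => forall n, lt (c n) b)
              (ex_intro _ b (fun n => Hb _ (ex_intro _ n eq_refl))))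
    as [Hub Hleast].
  exists (least (fun b => forall n, lt (c n) b)); split; [exact Hub|].
  intros y Hy; apply NNPP; intro N.
  refine (le_not_lt _ _ (Hleast y _) Hy); intro n; apply not_le_lt; eauto.
Qed.

Lemma club_closed_under (F : K -> K -> K) : club lt (closed_under F).
Proof.
  split.
  - intro a.
    set (next := fun x => epsilon K_nonempty
                   (fun b => lt x b /\ forall i k, lt i x -> lt k x -> lt (F i k) b)).
    assert (Hnext : forall x, lt x (next x) /\ forall i k, lt i x -> lt k x -> lt (F i k) (next x))
      by (intro x; apply (epsilon_spec K_nonempty), exists_closure_step).
    set (c := fun n => Nat.iter n next a).
    destruct (nat_seq_sup c) as [d [Hub Reach]].
    exists d; split; [|exact (Hub 0)].
    intros i k Hi Hk.
    destruct (Reach i Hi) as [ni Hni], (Reach k Hk) as [nk Hnk].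
    assert (Common : exists n, le lt i (c n) /\ le lt k (c n)).
    { destruct (pmax_spec (c ni, c nk)) as [Li [Lk [E|E]]]; simpl in *; rewrite E in Li, Lk;
        [exists ni|exists nk]; eauto using le_trans. }
    destruct Common as [n [Lin Lkn]].
    apply (lt_trans _ (c (S (S n)))); [|apply Hub].
    apply (proj2 (Hnext (c (S n)))); apply (le_lt_trans _ (c n)); auto; apply Hnext.
  - intros d _ Hd i k Hi Hk.
    destruct (pmax_spec (i, k)) as [Li [Lk E]]; simpl in *.
    destruct (Hd (pmax (i, k))) as [c [Cc [Hmc Hcd]]]; [destruct E as [-> | ->]; assumption|].
    exact (lt_trans _ _ _ (Cc i k (le_lt_trans _ _ _ Li Hmc) (le_lt_trans _ _ _ Lk Hmc)) Hcd).
Qed.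

Definition pair_lt (q p : K * K) : Prop :=
  lt (pmax q) (pmax p) \/
  (pmax q = pmax p /\ (lt (fst q) (fst p) \/ (fst q = fst p /\ lt (snd q) (snd p)))).

Lemma pair_lt_wf : well_founded pair_lt.
Proof.
  intros [i k]; remember (pmax (i, k)) as m eqn:Hm; revert i k Hm.
  induction m as [m IHm] using (well_founded_ind lt_wf); intro i.
  induction i as [i IHi] using (well_founded_ind lt_wf); intro k.
  induction k as [k IHk] using (well_founded_ind lt_wf); intro Hm.
  constructor; intros [i' k'] [H|[E [H|[Ei H]]]]; simpl in *.
  - rewrite <- Hm in H; exact (IHm _ H i' k' eq_refl).
  - apply IHi; congruence.
  - subst i'; apply IHk; congruence.
Qed.

Lemma pair_lt_total p q : p <> q -> pair_lt p q \/ pair_lt q p.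
Proof.
  intro N; unfold pair_lt.
  destruct (lt_total (pmax p) (pmax q)) as [H|[H|H]]; [tauto| |tauto].
  destruct (lt_total (fst p) (fst q)) as [H1|[H1|H1]]; [tauto| |right; right; auto].
  destruct (lt_total (snd p) (snd q)) as [H2|[H2|H2]]; [tauto| |right; right; auto].
  destruct p, q; simpl in *; subst; tauto.
Qed.

Lemma pair_lt_le_pmax q p : pair_lt q p -> le lt (fst q) (pmax p) /\ le lt (snd q) (pmax p).
Proof.
  intro H.
  assert (L : le lt (pmax q) (pmax p)) by (destruct H as [H|[H _]]; [left|right]; exact H).
  destruct (pmax_spec q) as [Lf [Ls _]]; eauto using le_trans.
Qed.

Definition pairing (i k : K) : K := rank pair_lt_wf (i, k).

Lemma pairing_lt q p : pair_lt q p -> lt (rank pair_lt_wf q) (rank pair_lt_wf p).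
Proof.
  intro H; refine (proj1 (rank_spec pair_lt_wf p _) q H).
  destruct (exists_gt (pmax p)) as [b Hb].
  destruct (small_bounded _ (small_pairs_image pairing b)) as [z Hz].
  exists z; intros [i k] Hq; apply Hz; exists i, k.
  destruct (pair_lt_le_pmax _ _ Hq) as [Li Lk]; simpl in *.
  repeat split; eauto using le_lt_trans.
Qed.

Lemma pairing_inj i k i' k' : pairing i k = pairing i' k' -> i = i' /\ k = k'.
Proof.
  intro E.
  destruct (classic ((i, k) = (i', k'))) as [Eq|N]; [injection Eq; auto|exfalso].
  destruct (pair_lt_total _ _ N) as [H|H]; apply pairing_lt in H;
    unfold pairing in E; rewrite E in H; exact (lt_irrefl _ H).
Qed.

Section Theta.
Variable theta : K.
Hypothesis theta_card : is_cardinal lt theta.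

Lemma not_injects_below_theta b : lt b theta -> ~ injects (below theta) (below b).
Proof. intros Hb H; exact (proj2 (theta_card b Hb) (injects_le_card _ _ H)). Qed.

Definition theta_thin (d : K) (R : set K) : Prop :=
  forall y, lt y d -> exists b, lt b theta /\ injects (fun x => R x /\ lt x y) (below b).

Lemma theta_thin_cofinal_in d R (e : set K) : theta_thin d R ->
  (forall x, e x -> R x) -> (forall x, e x -> lt x d) -> injects (below theta) e ->
  cofinal_in lt d e.
Proof.
  intros Hthin eR ed He; split; [exact ed|].
  intros y Hy; apply NNPP; intro N.
  destruct (Hthin y Hy) as [b [Hb Hinj]].
  apply (not_injects_below_theta b Hb), (injects_trans He),
    (injects_trans (Q := fun x => R x /\ lt x y));
    [apply subset_injects|exact Hinj].
  intros x ex; split; [auto|apply not_le_lt; intro; apply N; eauto].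
Qed.

(* Keep the s in S0 lying above every element of S0 of smaller h-value: below a kept r,
   the kept elements have h-values below h r < theta. *)
Lemma cof_theta_thin_cofinal d : cof_eq lt d theta ->
  exists S, cofinal_in lt d S /\ injects S (below theta) /\ theta_thin d S.
Proof.
  intros [[S0 [[S0d S0cof] HS0]] _].
  destruct (le_card_injects _ _ (proj1 HS0)) as [h [Hh Ih]].
  set (S := fun s => S0 s /\ forall s', S0 s' -> lt (h s') (h s) -> lt s' s).
  assert (Above : forall s, S0 s -> exists r, S r /\ le lt s r).
  { intros s Ss; remember (h s) as al eqn:E; revert s Ss E.
    induction al as [al IH] using (well_founded_ind lt_wf); intros s Ss E.
    destruct (classic (S s)) as [Rs|Rs]; [exists s; split; [exact Rs|apply le_refl]|].
    assert (Ex : exists s', S0 s' /\ lt (h s') (h s) /\ ~ lt s' s).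
    { apply NNPP; intro M; apply Rs; split; [exact Ss|].
      intros s' Ss' Hl; apply NNPP; intro; apply M; eauto. }
    destruct Ex as [s' [Ss' [Hl Hn]]]; subst al.
    destruct (IH _ Hl s' Ss' eq_refl) as [r [Sr Hr]].
    exists r; split; [exact Sr|exact (le_trans _ _ _ (not_lt_le _ _ Hn) Hr)]. }
  assert (Scof : cofinal_in lt d S).
  { split; [intros s [Ss _]; auto|].
    intros y Hy; destruct (S0cof y Hy) as [s [Ss Hs]]; destruct (Above s Ss) as [r [Sr Hr]].
    exists r; split; [exact Sr|exact (le_trans _ _ _ Hs Hr)]. }
  exists S; split; [exact Scof|split].
  - exists h; split; [intros s [Ss _]; exact (Hh s Ss)|intros x y [Sx _] [Sy _]; auto].
  - intros y Hy; destruct (proj2 Scof y Hy) as [r [[Sr0 Sr] Hr]].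
    exists (h r); split; [exact (Hh r Sr0)|].
    exists h; split; [|intros x z [[Sx _] _] [[Sz _] _]; auto].
    intros x [[Sx0 Sx] Hx]; assert (Hxr : lt x r) by exact (lt_le_trans _ _ _ Hx Hr).
    destruct (lt_total (h x) (h r)) as [H|[H|H]]; [exact H|exfalso..].
    + rewrite (Ih _ _ Sx0 Sr0 H) in Hxr; exact (lt_irrefl _ Hxr).
    + exact (le_not_lt _ _ (or_introl (Sx r Sr0 H)) Hxr).
Qed.

Lemma theta_thin_transfer d S (T : set K) :
  cofinal_in lt d S -> injects S (below theta) -> theta_thin d S -> cofinal_in lt d T ->
  exists R, (forall x, R x -> T x) /\ cofinal_in lt d R /\ injects R (below theta) /\
    theta_thin d R.
Proof.
  intros [Sd Scof] HS Sthin [Td Tcof].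
  set (up := fun y => least (fun t => T t /\ le lt y t)).
  assert (Hup : forall y, lt y d -> T (up y) /\ le lt y (up y)).
  { intros y Hy; exact (proj1 (least_spec (fun t => T t /\ le lt y t) (Tcof y Hy))). }
  exists (image up S); split; [|split; [split|split]].
  - intros t [s [Ss ->]]; exact (proj1 (Hup s (Sd s Ss))).
  - intros t [s [Ss ->]]; exact (Td _ (proj1 (Hup s (Sd s Ss)))).
  - intros y Hy; destruct (Scof y Hy) as [s [Ss Hs]].
    exists (up s); split; [exists s; auto|exact (le_trans _ _ _ Hs (proj2 (Hup s (Sd s Ss))))].
  - exact (injects_trans (image_injects _ _) HS).
  - intros y Hy; destruct (Sthin y Hy) as [b [Hb Hinj]]; exists b; split; [exact Hb|].
    refine (injects_trans _ (injects_trans (image_injects up (fun s => S s /\ lt s y)) Hinj)).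
    apply subset_injects; intros t [[s [Ss ->]] Ht]; exists s; split; [|reflexivity].
    split; [exact Ss|exact (le_lt_trans _ _ _ (proj2 (Hup s (Sd s Ss))) Ht)].
Qed.

Lemma cof_theta_thin_subset d (T : set K) : cof_eq lt d theta -> cofinal_in lt d T ->
  exists R, (forall x, R x -> T x) /\ injects R (below theta) /\ injects (below theta) R /\
    theta_thin d R.
Proof.
  intros Hcof Tcof.
  destruct (cof_theta_thin_cofinal d Hcof) as [S [Scof [HS Sthin]]].
  destruct (theta_thin_transfer d S T Scof HS Sthin Tcof) as [R [RT [Rcof [HR Rthin]]]].
  exists R; repeat split; auto.
  exact (le_card_injects _ _ (proj2 Hcof R Rcof)).
Qed.

Definition theta_cover (Y : set K) (b : K) (en : K -> set K) : Prop :=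
  forall e : set K, (forall x, e x -> Y x) -> injects e (below theta) -> injects (below theta) e ->
    exists k, lt k b /\ (forall x, en k x -> e x) /\ injects (below theta) (en k).

Lemma theta_cover_mono Y b b' en : lt b b' -> theta_cover Y b en -> theta_cover Y b' en.
Proof.
  intros Hb H e eY He1 He2; destruct (H e eY He1 He2) as [k [Hk Hek]].
  exists k; split; [exact (lt_trans _ _ _ Hk Hb)|exact Hek].
Qed.

Lemma theta_cover_pullback (Y Z : set K) (r : K -> K) b en :
  (forall x, Y x -> Z (r x)) -> (forall x y, Y x -> Y y -> r x = r y -> x = y) ->
  theta_cover Z b en -> theta_cover Y b (fun k x => Y x /\ en k (r x)).
Proof.
  intros rYZ rinj HZ e eY He1 He2.
  assert (re_inj : forall x y, e x -> e y -> r x = r y -> x = y) by auto.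
  destruct (HZ (image r e)) as [k [Hk [ek Hen]]].
  - intros z [x [ex ->]]; auto.
  - exact (injects_trans (image_injects _ _) He1).
  - exact (injects_trans He2 (injects_image _ _ re_inj)).
  - exists k; split; [exact Hk|split].
    + intros x [Yx Hx]; destruct (ek _ Hx) as [x0 [ex0 E]].
      rewrite (rinj _ _ Yx (eY _ ex0) E); exact ex0.
    + refine (injects_trans Hen
                (injects_trans (subset_injects _ (image r _) _) (image_injects r _))).
      intros z Hz; destruct (ek _ Hz) as [x [ex ->]]; exists x; auto.
Qed.

Section Sigma.
Variable sigma : K.
Hypothesis Hd : forall mu : K, is_cardinal lt mu -> le lt theta mu -> lt mu sigma ->
  d_lt_kappa lt theta mu.

Lemma theta_cover_cardinal mu : is_cardinal lt mu -> le lt theta mu -> lt mu sigma ->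
  exists b en, theta_cover (below mu) b en.
Proof.
  intros Hmu Hthmu Hmus.
  destruct (Hd mu Hmu Hthmu Hmus) as [X [HX [Xcover Xsmall]]].
  destruct (enumerate_small_family X Xsmall) as [b [en Hen]].
  exists b, en; intros e emu He1 He2.
  destruct (Xcover e emu (conj (injects_le_card _ _ He1) (injects_le_card _ _ He2)))
    as [B [XB Be]].
  destruct (Hen B XB) as [k [Hk <-]].
  exists k; split; [exact Hk|split; [exact Be|]].
  exact (le_card_injects _ _ (proj2 (proj2 (HX _ XB)))).
Qed.

Lemma theta_cover_below a : lt a sigma -> exists b en, theta_cover (below a) b en.
Proof.
  intro Has; destruct (classic (lt a theta)) as [Hat|Hat].
  - exists a, (fun _ _ => False); intros e ea _ He; exfalso.
    exact (not_injects_below_theta a Hat (injects_trans He (subset_injects _ _ ea))).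
  - destruct (cardinal_below a) as [mu [Hmu [Hmua [psi [Hpsi Ipsi]]]]].
    assert (Hthmu : le lt theta mu).
    { apply not_lt_le; intro Hmut; apply (not_injects_below_theta mu Hmut).
      refine (injects_trans (subset_injects _ (below a) _) (ex_intro _ psi (conj Hpsi Ipsi))).
      intros x Hx; exact (lt_le_trans _ _ _ Hx (not_lt_le _ _ Hat)). }
    destruct (theta_cover_cardinal mu Hmu Hthmu (le_lt_trans _ _ _ Hmua Has)) as [b [en Hcov]].
    exists b, (fun k x => below a x /\ en k (psi x)).
    exact (theta_cover_pullback _ _ psi b en Hpsi Ipsi Hcov).
Qed.

Lemma theta_cover_uniform : exists beta, forall Y : set K, ~ injects (below sigma) Y ->
  exists en, theta_cover Y beta en.
Proof.
  destruct (choice (fun a (p : K * (K -> set K)) =>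
                      lt a sigma -> theta_cover (below a) (fst p) (snd p)))
    as [cov Hcov].
  { intro a; destruct (classic (lt a sigma)) as [Ha|Ha].
    - destruct (theta_cover_below a Ha) as [b [en H]]; exists (b, en); auto.
    - exists (a, fun _ _ => False); tauto. }
  destruct (small_bounded _ (small_image (fun a => fst (cov a)) _ (small_below sigma)))
    as [beta Hbeta].
  exists beta; intros Y HY.
  destruct (shorter_injects_below Y sigma HY) as [a [Ha [r [Hr Ir]]]].
  exists (fun k x => Y x /\ snd (cov a) k (r x)).
  apply (theta_cover_mono _ (fst (cov a))); [apply Hbeta; exists a; auto|].
  exact (theta_cover_pullback _ _ r _ _ Hr Ir (Hcov a Ha)).
Qed.

Lemma theta_cover_family (B : K -> K -> set K) :
  (forall i d, lt i d -> ~ injects (below sigma) (B i d)) ->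
  exists beta (E : K -> K -> K -> set K), forall i d, lt i d -> theta_cover (B i d) beta (E i d).
Proof.
  intro HB; destruct theta_cover_uniform as [beta Hbeta].
  exists beta, (fun i d => epsilon (inhabits (fun _ _ => False)) (theta_cover (B i d) beta)).
  intros i d Hid; apply epsilon_spec, Hbeta, HB, Hid.
Qed.

End Sigma.

Section Guess.
Variable E : K -> K -> K -> set K.

(* Since [pairing] is injective, [guess (pairing i k) d] is [E i d k] when that set is
   cofinal in d, and d itself when no such (i, k) exists. *)
Definition guess (j d : K) : set K := fun x =>
  lt x d /\ forall i k, pairing i k = j -> cofinal_in lt d (E i d k) -> E i d k x.

Lemma guess_cofinal_in j d : cofinal_in lt d (guess j d).
Proof.
  destruct (classic (exists i k, pairing i k = j /\ cofinal_in lt d (E i d k)))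
    as [[i [k [<- Hc]]]|N].
  - apply (cofinal_in_mono d (E i d k)); [|intros x [Hx _]; exact Hx|exact Hc].
    intros x Hx; split; [exact (proj1 Hc x Hx)|].
    intros i' k' Ep _; destruct (pairing_inj _ _ _ _ Ep) as [<- <-]; exact Hx.
  - apply (cofinal_in_mono d (below d)); [|intros x [Hx _]; exact Hx|apply below_cofinal_in].
    intros x Hx; split; [exact Hx|intros i k Ep Hc; exfalso; eauto].
Qed.

Variable J : set (set K).
Hypothesis HJ : is_ideal lt J.
Hypothesis HNS : forall B : set K, NS_restr lt theta B -> J B.

Lemma ideal_of_club_disjoint (P : set K) C :
  club lt C -> (forall d, C d -> E_cof lt theta d -> ~ P d) -> J P.
Proof.
  intros HC HP; apply HNS; exists C; split; [exact HC|].
  intros d Cd [Pd Ed]; exact (HP d Cd Ed Pd).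
Qed.

Lemma ideal_not_E_cof : J (fun d => ~ E_cof lt theta d).
Proof.
  apply (ideal_of_club_disjoint _ (fun _ => True)); [|tauto].
  split; [intro a; destruct (exists_gt a) as [b Hb]; eauto|auto].
Qed.

Lemma ideal_not_closed_under F : J (fun d => ~ closed_under F d).
Proof. apply (ideal_of_club_disjoint _ (closed_under F)); [apply club_closed_under|tauto]. Qed.

Variable B : K -> K -> set K.
Hypothesis B_below : forall i d, lt i d -> forall x, B i d x -> lt x d.
Variable beta : K.
Hypothesis E_cover : forall i d, lt i d -> theta_cover (B i d) beta (E i d).

Lemma guess_subset_of_sup (A : set K) d i : E_cof lt theta d -> closed_under pairing d ->
  lt beta d -> lt i d -> sup_is lt (fun x => A x /\ B i d x) d ->
  exists j, lt j d /\ forall x, guess j d x -> A x.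
Proof.
  intros [_ Hcof] Hclosed Hbeta Hi Hsup.
  assert (Td : forall x, A x /\ B i d x -> lt x d)
    by (intros x [_ Bx]; exact (B_below i d Hi x Bx)).
  destruct (cof_theta_thin_subset d _ Hcof (cofinal_in_sup_is d _ Td Hsup))
    as [R [RT [HR1 [HR2 Rthin]]]].
  destruct (E_cover i d Hi R (fun x Rx => proj2 (RT x Rx)) HR1 HR2) as [k [Hk [ER HE]]].
  assert (Ecof : cofinal_in lt d (E i d k))
    by (apply (theta_thin_cofinal_in d R); auto; intros x Ex; apply Td, RT, ER, Ex).
  exists (pairing i k); split; [exact (Hclosed i k Hi (lt_trans _ _ _ Hk Hbeta))|].
  intros x [_ Hx]; exact (proj1 (RT x (ER x (Hx i k eq_refl Ecof)))).
Qed.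

Lemma guess_dual (A : set K) :
  dual J (fun d => exists i, lt i d /\ sup_is lt (fun x => A x /\ B i d x) d) ->
  dual J (fun d => is_limit lt d /\ exists j, lt j d /\ forall x, guess j d x -> A x).
Proof.
  unfold dual; intro HA; destruct HJ as [_ [_ [Jbounded [Jsub Junion]]]].
  refine (Jsub _ _ (Junion _ _ (Junion _ _ (Junion _ _ (ideal_not_E_cof)
            (ideal_not_closed_under pairing)) (Jbounded (fun d => le lt d beta) _)) HA) _).
  - destruct (exists_gt beta) as [b Hb]; exists b; intros x Hx; exact (le_lt_trans _ _ _ Hx Hb).
  - intros d Hbad; apply NNPP; intro Hgood; apply Hbad.
    assert (HE : E_cof lt theta d) by (apply NNPP; tauto).
    assert (Hclosed : closed_under pairing d) by (apply NNPP; tauto).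
    assert (Hbeta : lt beta d) by (apply not_le_lt; tauto).
    assert (Hsup : exists i, lt i d /\ sup_is lt (fun x => A x /\ B i d x) d)
      by (apply NNPP; tauto).
    destruct Hsup as [i [Hi Hsup]].
    split; [exact (proj1 HE)|exact (guess_subset_of_sup A d i HE Hclosed Hbeta Hi Hsup)].
Qed.

End Guess.

End Theta.

End Kappa.
End Ordinals.

Theorem proposition3p26 (K : Type) (lt : K -> K -> Prop)
  (Hwo : well_order lt) (Hkappa : regular_uncountable_cardinal lt)
  (theta sigma : K)
  (Htheta_card : is_cardinal lt theta) (Htheta_inf : infinite_ord lt theta)
  (Htheta_reg : regular_card lt theta)
  (Hsigma_card : is_cardinal lt sigma) (Hsigma_inf : infinite_ord lt sigma)
  (Hts : lt theta sigma)
  (Hd : forall mu : K, is_cardinal lt mu -> le lt theta mu -> lt mu sigma ->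
          d_lt_kappa lt theta mu)
  (J : set (set K)) (HJ : @is_ideal K lt J) (HJc : @kappa_complete K J)
  (HNS : forall B : set K, NS_restr lt theta B -> J B)
  (Hcof : @clubsuit_cof_star K lt sigma J) :
  @clubsuit_star K lt J.
Proof.
  pose proof (inhabits theta) as K_nonempty.
  destruct Hcof as [B [HB HBguess]].
  assert (B_short : forall i d, lt i d -> ~ injects (below sigma) (B i d))
    by (intros i d Hid Hinj; exact (proj2 (proj2 (HB i d Hid)) (injects_le_card _ _ Hinj))).
  destruct (theta_cover_family Hwo K_nonempty Hkappa theta Htheta_card sigma Hd B B_short)
    as [beta [E HE]].
  exists (guess Hwo K_nonempty E); split.
  - intros j d Hlim _; pose proof (guess_cofinal_in Hwo K_nonempty Hkappa E j d) as Hc.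
    split; [exact (proj1 Hc)|exact (sup_is_cofinal_in Hwo d _ Hlim Hc)].
  - intros A HA.
    apply (guess_dual Hwo K_nonempty Hkappa theta Htheta_card E J HJ HNS B
             (fun i d Hid => proj1 (HB i d Hid)) beta HE), HBguess, HA.
Qed.
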